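(* Let $G$ be a group, $\nu$ a conjugation-invariant pseudo-norm on $G$, and $H\in\mathsf{FM}(G)$. For any $\hat\phi\in L(G,\nu)$, the function $\phi\colon G\to\mathbb{R}$, $\phi(g)=\hat\phi([g^1])$, is a homogeneous $H$-quasimorphism, and $D(\phi)\le 8\,l(\hat\phi)\cdot E_{H,\nu}(H)$, where $l(\hat\phi)$ is the optimal Lipschitz constant of $\hat\phi$.
   Context: A conjugation-invariant pseudo-norm on a group $G$ is a function $\nu\colon G\to\mathbb{R}_{\ge0}$ with $\nu(1)=0$, $\nu(f)=\nu(f^{-1})$, $\nu(fg)\le\nu(f)+\nu(g)$ and $\nu(gfg^{-1})=\nu(f)$ for all $f,g\in G$. For a subgroup $H\le G$, $\nu_H(f)$ is the minimal $k$ such that $f=g_1h_1g_1^{-1}\cdots g_kh_kg_k^{-1}$ ($g_i\in G,h_i\in H$), $\infty$ if none. A function $\phi\colon G\to\mathbb{R}$ is an $H$-quasimorphism if there is $C>0$ with $|\phi(fg)-\phi(f)-\phi(g)|<C\min\{\nu_H(f),\nu_H(g)\}$ for all $f,g$; the infimum of such $C$ is $D(\phi)$; $\phi$ is homogeneous if $\phi(f^n)=n\phi(f)$ for all $n\in\mathbb{Z}$. For $K\subset G$, $\mathrm{D}^f_H(K)$ is the set of $h_0\in G$ such that for all $g_1,\dots,g_k\in G$ there is $h\in G$ with every element of $hh_0h^{-1}K(hh_0h^{-1})^{-1}$ commuting with every element of $\bigcup_i g_iHg_i^{-1}$; $E_{H,\nu}(K)=\inf_{h_0\in\mathrm{D}^f_H(K)}\nu(h_0)$.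 $(G,H)$ satisfies $\mathsf{FM}$ if $\nu_H<\infty$ on $G$ and $\mathrm{D}^f_H(h_1Hh_1^{-1}\cup\dots\cup h_kHh_k^{-1})\ne\emptyset$ for all $h_1,\dots,h_k\in G$; $\mathsf{FM}(G)$ is the set of such subgroups $H$. $A_G=\coprod_{k\ge0}(G\times\mathbb{R})^k$, elements written as formal words $g_1^{s_1}\cdots g_k^{s_k}$, empty word $1$; $\mathtt{g}\cdot\mathtt{h}$ is concatenation, $\bar{\mathtt{g}}=g_k^{-s_k}\cdots g_1^{-s_1}$, $\mathtt{g}^{(\lambda)}=g_1^{\lambda s_1}\cdots g_k^{\lambda s_k}$; $\|\mathtt{g}\|_\nu=\lim_{n\to\infty}\frac1n\nu(g_1^{[s_1n]}\cdots g_k^{[s_kn]})$ ($[\cdot]$ integer part), $\|1\|_\nu=0$; $\mathtt{g}\sim\mathtt{h}$ iff $\|\mathtt{g}\cdot\bar{\mathtt{h}}\|_\nu=0$; $A_\nu=A_G/\sim$ is a real normed vector space with $[\mathtt{g}]+[\mathtt{h}]=[\mathtt{g}\cdot\mathtt{h}]$, $\lambda[\mathtt{g}]=[\mathtt{g}^{(\lambda)}]$, norm $\|[\mathtt{g}]\|_\nu=\|\mathtt{g}\|_\nu$. $L(G,\nu)$ is the set of Lipschitz continuous linear maps $A_\nu\to\mathbb{R}$; $[g^1]$ is the class of the one-letter word $g^1$. *)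

From Stdlib Require Import Reals List ZArith.
From Coquelicot Require Import Coquelicot.
Open Scope R_scope.

Record Grp := {
  gcar :> Type;
  gmul : gcar -> gcar -> gcar;
  gone : gcar;
  ginv : gcar -> gcar;
  gmulA : forall x y z, gmul x (gmul y z) = gmul (gmul x y) z;
  gmul1l : forall x, gmul gone x = x;
  gmul1r : forall x, gmul x gone = x;
  gmulVl : forall x, gmul (ginv x) x = gone;
  gmulVr : forall x, gmul x (ginv x) = gone
}.
Arguments gmul {G} : rename.
Arguments gone {G} : rename.
Arguments ginv {G} : rename.

Section GroupDefs.
Variable G : Grp.

Definition gconj (a b : G) : G := gmul (gmul a b) (ginv a).

Definition gcommute (a b : G) : Prop := gmul a b = gmul b a.

Fixpoint gnpow (g : G) (n : nat) : G :=
  match n with O => gone | S m => gmul g (gnpow g m) end.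

Definition gzpow (g : G) (z : Z) : G :=
  match z with
  | Z0 => gone
  | Zpos p => gnpow g (Pos.to_nat p)
  | Zneg p => ginv (gnpow g (Pos.to_nat p))
  end.

Definition conj_inv_pseudo_norm (nu : G -> R) : Prop :=
  (forall f, 0 <= nu f) /\
  nu gone = 0 /\
  (forall f, nu f = nu (ginv f)) /\
  (forall f g, nu (gmul f g) <= nu f + nu g) /\
  (forall f g, nu (gconj g f) = nu f).

Definition is_subgroup (H : G -> Prop) : Prop :=
  H gone /\ (forall x y, H x -> H y -> H (gmul x y)) /\ (forall x, H x -> H (ginv x)).

Definition conj_prod_len (H : G -> Prop) (f : G) (k : nat) : Prop :=
  exists l : list (G * G),
    length l = k /\ List.Forall (fun p => H (snd p)) l /\
    f = fold_right (fun p acc => gmul (gconj (fst p) (snd p)) acc) gone l.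

(* nu_H(f): minimal such k, +oo if none (Glb of the empty set is +oo) *)
Definition nuH (H : G -> Prop) (f : G) : Rbar :=
  Glb_Rbar (fun x => exists k, conj_prod_len H f k /\ x = INR k).

Definition qm_ineq (H : G -> Prop) (phi : G -> R) (C : R) : Prop :=
  forall f g, Rbar_le (Finite (Rabs (phi (gmul f g) - phi f - phi g)))
                      (Rbar_mult (Finite C) (Rbar_min (nuH H f) (nuH H g))).

Definition H_quasimorphism (H : G -> Prop) (phi : G -> R) : Prop :=
  exists C, 0 < C /\ qm_ineq H phi C.

Definition Dqm (H : G -> Prop) (phi : G -> R) : Rbar :=
  Glb_Rbar (fun C => 0 < C /\ qm_ineq H phi C).

Definition homogeneous (phi : G -> R) : Prop :=
  forall g (n : Z), phi (gzpow g n) = IZR n * phi g.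

Definition DfH (H : G -> Prop) (K : G -> Prop) (h0 : G) : Prop :=
  forall gs : list G, exists h : G,
    forall k, K k -> forall gi x, In gi gs -> H x ->
      gcommute (gconj (gconj h h0) k) (gconj gi x).

Definition EHnu (nu : G -> R) (H : G -> Prop) (K : G -> Prop) : Rbar :=
  Glb_Rbar (fun x => exists h0, DfH H K h0 /\ x = nu h0).

Definition FM (H : G -> Prop) : Prop :=
  is_subgroup H /\
  (forall f, nuH H f <> p_infty) /\
  (forall hs : list G, exists h0,
      DfH H (fun y => exists hi x, In hi hs /\ H x /\ y = gconj hi x) h0).

(* A_G : formal words g_1^{s_1} ... g_k^{s_k} *)
Definition word := list (G * R).

Definition wbar (w : word) : word := rev (map (fun p => (fst p, - snd p)) w).

Definition wscale (l : R) (w : word) : word := map (fun p => (fst p, l * snd p)) w.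

(* g_1^{[s_1 n]} ... g_k^{[s_k n]}  ([.] = integer part, floor) *)
Definition wprod (n : nat) (w : word) : G :=
  fold_right (fun p acc => gmul (gzpow (fst p) (Int_part (snd p * INR n))) acc) gone w.

Definition wnorm (nu : G -> R) (w : word) : R :=
  real (Lim_seq (fun n => nu (wprod n w) / INR n)).

(* psi : A_G -> R represents a map A_nu -> R that is linear
   ([g]+[h] = [g.h], lambda [g] = [g^(lambda)]) and Lipschitz
   for the norm of A_nu (||[g]-[h]|| = ||g . hbar||) with constant C *)
Definition lip_with (nu : G -> R) (psi : word -> R) (C : R) : Prop :=
  0 <= C /\ forall w v, Rabs (psi w - psi v) <= C * wnorm nu (w ++ wbar v).

Definition in_L (nu : G -> R) (psi : word -> R) : Prop :=
  (forall w v, psi (w ++ v) = psi w + psi v) /\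
  (forall l w, psi (wscale l w) = l * psi w) /\
  (exists C, lip_with nu psi C).

Definition lip_const (nu : G -> R) (psi : word -> R) : Rbar :=
  Glb_Rbar (fun C => lip_with nu psi C).

End GroupDefs.

Arguments gconj {G}.
Arguments gzpow {G}.

(* Since a^n c^-n is a product of n conjugates of a c^-1, the Lipschitz bound on psi gives
   |phi a - phi c| <= l nu(a c^-1); words whose products are trivial show that phi is
   homogeneous and additive on commuting pairs.
   For x = c z c^-1 with z in H and any h, write h as a product of conjugates of elements
   of H; a suitable conjugate t of a displacer h0 turns y = c t z t^-1 c^-1 into an element
   commuting with h with nu(x y^-1) <= 2 nu(h0), whence |phi(xh) - phi x - phi h| <= 4 l nu(h0),
   and likewise on the other side.  The cocycle identity for the defect telescopes this over a
   product of k conjugates of H, giving the defect bound 8 l nu(h0) k; the constant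
   8 l(psi) E_{H,nu}(H) follows by taking infima over l and h0. *)

From Stdlib Require Import Reals List ZArith Lia Lra Classical.
From Coquelicot Require Import Coquelicot.
Open Scope R_scope.

Arguments gmulA {_} x y z.
Arguments gmul1l {_} x.
Arguments gmul1r {_} x.
Arguments gmulVl {_} x.
Arguments gmulVr {_} x.

Lemma gmulK {G : Grp} (a b : G) : gmul (gmul a b) (ginv b) = a.
Proof. rewrite <- gmulA, gmulVr, gmul1r. reflexivity. Qed.

Lemma gmulVK {G : Grp} (a b : G) : gmul (gmul a (ginv b)) b = a.
Proof. rewrite <- gmulA, gmulVl, gmul1r. reflexivity. Qed.

Lemma ginv_unique {G : Grp} (a b : G) : gmul a b = gone -> b = ginv a.
Proof.
  intro E. rewrite <- (gmul1l b), <- (gmulVl a), <- gmulA, E, gmul1r. reflexivity.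
Qed.

Lemma ginv_mul {G : Grp} (a b : G) : ginv (gmul a b) = gmul (ginv b) (ginv a).
Proof. symmetry. apply ginv_unique. rewrite gmulA, gmulK, gmulVr. reflexivity. Qed.

Lemma ginvK {G : Grp} (a : G) : ginv (ginv a) = a.
Proof. symmetry. apply ginv_unique. apply gmulVl. Qed.

Lemma ginv_one {G : Grp} : ginv (@gone G) = gone.
Proof. symmetry. apply ginv_unique. apply gmul1l. Qed.

Ltac gsimpl := unfold gconj; repeat rewrite ?ginv_mul, ?ginvK, ?ginv_one, ?gmulA,
  ?gmul1l, ?gmul1r, ?gmulVr, ?gmulVl, ?gmulK, ?gmulVK.

Lemma gnpowD {G : Grp} (g : G) m n : gnpow G g (m + n) = gmul (gnpow G g m) (gnpow G g n).
Proof. induction m as [|m IH]; simpl; [|rewrite IH]; gsimpl; reflexivity. Qed.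

Lemma gnpowSr {G : Grp} (g : G) n : gnpow G g (S n) = gmul (gnpow G g n) g.
Proof. rewrite <- Nat.add_1_r, gnpowD. simpl. gsimpl. reflexivity. Qed.

Lemma gzpow_nat {G : Grp} (g : G) n : gzpow g (Z.of_nat n) = gnpow G g n.
Proof. destruct n; [reflexivity|]. simpl. rewrite SuccNat2Pos.id_succ. reflexivity. Qed.

Lemma gzpow_succ {G : Grp} (g : G) z : gzpow g (Z.succ z) = gmul g (gzpow g z).
Proof.
  destruct (Z_le_gt_dec 0 z).
  - rewrite <- (Z2Nat.id z), <- Nat2Z.inj_succ, !gzpow_nat by lia. reflexivity.
  - destruct (Z.to_nat (- z)) as [|k] eqn:Ek; [lia|].
    replace z with (Zneg (Pos.of_succ_nat k)) by lia.
    replace (Z.succ (Zneg (Pos.of_succ_nat k))) with (- Z.of_nat k)%Z by lia.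
    destruct k as [|k]; simpl; [gsimpl; reflexivity|].
    rewrite Pos2Nat.inj_succ, SuccNat2Pos.id_succ, (gnpowSr g (S k)). gsimpl. reflexivity.
Qed.

Lemma gzpowD {G : Grp} (g : G) a b : gzpow g (a + b) = gmul (gzpow g a) (gzpow g b).
Proof.
  revert b. induction a as [|a IH|a IH] using Z.peano_ind; intro b.
  - simpl. gsimpl. reflexivity.
  - rewrite Z.add_succ_l, !gzpow_succ, IH. gsimpl. reflexivity.
  - assert (Epred : forall z, gzpow g (Z.pred z) = gmul (ginv g) (gzpow g z)).
    { intro z. rewrite <- (Z.succ_pred z) at 2. rewrite gzpow_succ. gsimpl. reflexivity. }
    rewrite Z.add_pred_l, !Epred, IH. gsimpl. reflexivity.
Qed.

Lemma gzpowN {G : Grp} (g : G) a : gzpow g (- a) = ginv (gzpow g a).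
Proof. apply ginv_unique. rewrite <- gzpowD, Z.add_opp_diag_r. reflexivity. Qed.

Lemma gzpow_gzpow_nat {G : Grp} (g : G) a n :
  gzpow (gzpow g a) (Z.of_nat n) = gzpow g (a * Z.of_nat n).
Proof.
  rewrite gzpow_nat. induction n as [|n IH]; simpl gnpow.
  - rewrite Z.mul_0_r. reflexivity.
  - rewrite IH, <- gzpowD. f_equal. lia.
Qed.

Lemma gcommute_gnpow {G : Grp} (a b : G) n : gcommute G a b -> gcommute G (gnpow G a n) b.
Proof.
  unfold gcommute. intro C. induction n as [|n IH]; simpl; gsimpl; [reflexivity|].
  rewrite <- gmulA, IH, !gmulA, C. reflexivity.
Qed.

Lemma gnpow_mul_commute {G : Grp} (a b : G) n :
  gcommute G a b -> gnpow G (gmul a b) n = gmul (gnpow G a n) (gnpow G b n).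
Proof.
  intro C. induction n as [|n IH]; simpl; [gsimpl; reflexivity|].
  rewrite IH, <- !gmulA. f_equal. rewrite !gmulA. f_equal.
  symmetry. apply gcommute_gnpow. exact C.
Qed.

Lemma gcommute_conj {G : Grp} (a b c : G) :
  gcommute G a b -> gcommute G (gconj c a) (gconj c b).
Proof.
  unfold gcommute. intro E.
  replace (gmul (gconj c a) (gconj c b)) with (gconj c (gmul a b)) by (gsimpl; reflexivity).
  rewrite E. gsimpl. reflexivity.
Qed.

Lemma gcommute_mulr {G : Grp} (y a b : G) :
  gcommute G y a -> gcommute G y b -> gcommute G y (gmul a b).
Proof. unfold gcommute. intros Ea Eb. rewrite gmulA, Ea, <- gmulA, Eb, gmulA. reflexivity. Qed.

Definition conj_prod {G : Grp} (l : list (G * G)) : G :=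
  fold_right (fun p acc => gmul (gconj (fst p) (snd p)) acc) gone l.

Lemma gcommute_conj_prod {G : Grp} (y : G) l :
  (forall p, In p l -> gcommute G y (gconj (fst p) (snd p))) -> gcommute G y (conj_prod l).
Proof.
  induction l as [|p l IH]; intro Hl; simpl.
  - unfold gcommute. gsimpl. reflexivity.
  - apply gcommute_mulr; [apply Hl; left; reflexivity|].
    apply IH. intros q Hq. apply Hl. right. exact Hq.
Qed.

Lemma Int_part_IZR z : Int_part (IZR z) = z.
Proof. symmetry. apply Int_part_spec. lra. Qed.

Lemma wprod_cons_IZR {G : Grp} n (g : G) z w :
  wprod G n ((g, IZR z) :: w) = gmul (gzpow g (z * Z.of_nat n)) (wprod G n w).
Proof. unfold wprod. simpl. rewrite INR_IZR_INZ, <- mult_IZR, Int_part_IZR. reflexivity. Qed.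

Section PseudoNorm.
Variables (G : Grp) (nu : G -> R).
Hypothesis Hnu : conj_inv_pseudo_norm G nu.

Lemma nu_ge0 f : 0 <= nu f. Proof. apply Hnu. Qed.
Lemma nu_one : nu gone = 0. Proof. apply Hnu. Qed.
Lemma nuV f : nu (ginv f) = nu f. Proof. symmetry. apply Hnu. Qed.
Lemma nu_mul_le f g : nu (gmul f g) <= nu f + nu g. Proof. apply Hnu. Qed.
Lemma nu_conj f g : nu (gconj g f) = nu f. Proof. apply Hnu. Qed.

Lemma wnorm_le w K :
  0 <= K -> (forall n, nu (wprod G n w) <= INR n * K) -> wnorm G nu w <= K.
Proof.
  intros HK Hb. unfold wnorm.
  assert (L : Rbar_le (Lim_seq (fun n => nu (wprod G n w) / INR n)) (Lim_seq (fun _ => K))).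
  { apply Lim_seq_le_loc. exists 1%nat. intros n Hn.
    assert (0 < INR n) by (apply lt_0_INR; lia).
    apply Rle_div_l; [lra|]. rewrite Rmult_comm. apply Hb. }
  rewrite Lim_seq_const in L.
  destruct (Lim_seq _); simpl in *; lra.
Qed.

Lemma nu_gnpow_div_le a c n :
  nu (gmul (gnpow G a n) (ginv (gnpow G c n))) <= INR n * nu (gmul a (ginv c)).
Proof.
  induction n as [|n IH].
  - simpl. rewrite gmul1l, ginv_one, nu_one. lra.
  - rewrite S_INR.
    replace (gmul (gnpow G a (S n)) (ginv (gnpow G c (S n))))
      with (gmul (gmul a (ginv c)) (gconj c (gmul (gnpow G a n) (ginv (gnpow G c n)))))
      by (simpl; gsimpl; reflexivity).
    eapply Rle_trans; [apply nu_mul_le|]. rewrite nu_conj. lra.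
Qed.

End PseudoNorm.

Section Defect.
Variables (G : Grp) (phi : G -> R).

Definition defect (f g : G) : R := phi (gmul f g) - phi f - phi g.

Lemma defect_cocycle a b c :
  defect (gmul a b) c + defect a b = defect a (gmul b c) + defect b c.
Proof. unfold defect. rewrite gmulA. ring. Qed.

Variables (H : G -> Prop) (K : R).
Hypothesis phi_one : phi gone = 0.
Hypothesis defect_conj_l : forall c z h, H z -> Rabs (defect (gconj c z) h) <= K.
Hypothesis defect_conj_r : forall c z h, H z -> Rabs (defect h (gconj c z)) <= K.

Lemma defect_conj_prod_l l g :
  List.Forall (fun p => H (snd p)) l ->
  Rabs (defect (conj_prod l) g) <= 2 * K * INR (length l).
Proof.
  intro Hl. revert g. induction Hl as [|[c z] l Hz Hl IH]; intro g.
  - simpl. unfold defect. rewrite gmul1l, phi_one, Rminus_0_r, Rminus_diag, Rabs_R0. lra.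
  - change (conj_prod ((c, z) :: l)) with (gmul (gconj c z) (conj_prod l)).
    cbn [length]. rewrite S_INR.
    pose proof (defect_cocycle (gconj c z) (conj_prod l) g) as E.
    pose proof (defect_conj_l c z (gmul (conj_prod l) g) Hz).
    pose proof (defect_conj_l c z (conj_prod l) Hz).
    pose proof (IH g).
    revert E. unfold Rabs in *. repeat destruct Rcase_abs; intro; lra.
Qed.

Lemma defect_conj_prod_r l f :
  List.Forall (fun p => H (snd p)) l ->
  Rabs (defect f (conj_prod l)) <= 2 * K * INR (length l).
Proof.
  intro Hl. revert f. induction Hl as [|[c z] l Hz Hl IH]; intro f.
  - simpl. unfold defect. rewrite gmul1r, phi_one, Rminus_0_r, Rminus_diag, Rabs_R0. lra.
  - change (conj_prod ((c, z) :: l)) with (gmul (gconj c z) (conj_prod l)).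
    cbn [length]. rewrite S_INR.
    pose proof (defect_cocycle f (gconj c z) (conj_prod l)) as E.
    pose proof (defect_conj_r c z f Hz).
    pose proof (defect_conj_l c z (conj_prod l) Hz).
    pose proof (IH (gmul f (gconj c z))).
    revert E. unfold Rabs in *. repeat destruct Rcase_abs; intro; lra.
Qed.

End Defect.

Definition phi_of {G : Grp} (psi : word G -> R) (g : G) : R := psi ((g, 1) :: nil).

Section LipschitzFunctional.
Variables (G : Grp) (nu : G -> R) (psi : word G -> R) (C : R).
Hypothesis Hnu : conj_inv_pseudo_norm G nu.
Hypothesis HC : lip_with G nu psi C.

Lemma psi_eq_of_wprod_one w v : (forall n, wprod G n (w ++ wbar G v) = gone) -> psi w = psi v.
Proof.
  intro E. destruct HC as [C_ge0 Hlip].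
  assert (W : wnorm G nu (w ++ wbar G v) <= 0).
  { apply wnorm_le; [lra|]. intro n. rewrite E, nu_one by exact Hnu. lra. }
  specialize (Hlip w v).
  assert (C * wnorm G nu (w ++ wbar G v) <= 0) by nra.
  revert Hlip. unfold Rabs. destruct Rcase_abs; intro; lra.
Qed.

Lemma phi_of_lipschitz a c : Rabs (phi_of psi a - phi_of psi c) <= C * nu (gmul a (ginv c)).
Proof.
  destruct HC as [C_ge0 Hlip]. eapply Rle_trans; [apply Hlip|].
  apply Rmult_le_compat_l; [exact C_ge0|].
  apply wnorm_le; [apply nu_ge0, Hnu|]. intro n. unfold wbar; cbn -[wprod].
  rewrite <- opp_IZR, !wprod_cons_IZR, Z.mul_opp_l, Z.mul_1_l, gzpowN, !gzpow_nat.
  simpl wprod. rewrite gmul1r. apply nu_gnpow_div_le, Hnu.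
Qed.

Hypothesis Hscale : forall l w, psi (wscale G l w) = l * psi w.

Lemma phi_of_homogeneous : homogeneous G (phi_of psi).
Proof.
  intros g z. unfold phi_of. rewrite <- Hscale. apply psi_eq_of_wprod_one.
  intro n. unfold wbar, wscale; cbn -[wprod].
  rewrite Rmult_1_r, <- opp_IZR, !wprod_cons_IZR, Z.mul_opp_l, Z.mul_1_l, gzpowN,
    gzpow_gzpow_nat.
  simpl wprod. gsimpl. reflexivity.
Qed.

Hypothesis Hadd : forall w v, psi (w ++ v) = psi w + psi v.

Lemma phi_of_mul_commute a b :
  gcommute G a b -> phi_of psi (gmul a b) = phi_of psi a + phi_of psi b.
Proof.
  intro Hab. unfold phi_of. rewrite <- Hadd. apply psi_eq_of_wprod_one.
  intro n. unfold wbar; cbn -[wprod].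
  rewrite <- opp_IZR, !wprod_cons_IZR, Z.mul_opp_l, Z.mul_1_l, !gzpowN, !gzpow_nat.
  simpl wprod. rewrite gnpow_mul_commute by exact Hab. gsimpl. reflexivity.
Qed.

Lemma phi_of_one : phi_of psi gone = 0.
Proof.
  pose proof (phi_of_mul_commute gone gone eq_refl) as E. rewrite gmul1l in E. lra.
Qed.

Lemma defect_phi_of_l x y h :
  gcommute G y h -> Rabs (defect G (phi_of psi) x h) <= 2 * C * nu (gmul x (ginv y)).
Proof.
  intro Hyh. unfold defect.
  pose proof (phi_of_lipschitz (gmul x h) (gmul y h)) as Pxh.
  replace (gmul (gmul x h) (ginv (gmul y h))) with (gmul x (ginv y)) in Pxh
    by (gsimpl; reflexivity).
  rewrite (phi_of_mul_commute y h Hyh) in Pxh.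
  pose proof (phi_of_lipschitz y x) as Pyx.
  replace (gmul y (ginv x)) with (ginv (gmul x (ginv y))) in Pyx by (gsimpl; reflexivity).
  rewrite nuV in Pyx by exact Hnu.
  revert Pxh Pyx. unfold Rabs. repeat destruct Rcase_abs; intros; lra.
Qed.

Lemma defect_phi_of_r x y h :
  gcommute G y h -> Rabs (defect G (phi_of psi) h x) <= 2 * C * nu (gmul x (ginv y)).
Proof.
  intro Hyh. unfold defect.
  pose proof (phi_of_lipschitz (gmul h x) (gmul h y)) as Phx.
  replace (gmul (gmul h x) (ginv (gmul h y))) with (gconj h (gmul x (ginv y))) in Phx
    by (gsimpl; reflexivity).
  rewrite nu_conj in Phx by exact Hnu.
  rewrite <- Hyh, (phi_of_mul_commute y h Hyh) in Phx.
  pose proof (phi_of_lipschitz y x) as Pyx.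
  replace (gmul y (ginv x)) with (ginv (gmul x (ginv y))) in Pyx by (gsimpl; reflexivity).
  rewrite nuV in Pyx by exact Hnu.
  revert Phx Pyx. unfold Rabs. repeat destruct Rcase_abs; intros; lra.
Qed.

End LipschitzFunctional.

Lemma Rbar_le_mult_pos (c y : R) (z : Rbar) :
  0 < c -> Rbar_le (Finite y) z -> Rbar_le (Finite (c * y)) (Rbar_mult (Finite c) z).
Proof.
  intros Hc. destruct z as [z| |]; intro Hyz; simpl in Hyz; [| |contradiction].
  - simpl. apply Rmult_le_compat_l; lra.
  - rewrite Rbar_mult_comm, (is_Rbar_mult_unique _ _ _ (is_Rbar_mult_p_infty_pos c Hc)).
    exact I.
Qed.

Lemma Glb_Rbar_inhabited (E : R -> Prop) : Glb_Rbar E <> p_infty -> exists x, E x.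
Proof.
  intro Hfin. apply NNPP. intro Hempty. apply Hfin.
  destruct (Glb_Rbar_correct E) as [_ Hglb].
  assert (Hp : Rbar_le p_infty (Glb_Rbar E)).
  { apply Hglb. intros x Hx. exfalso. apply Hempty. exists x. exact Hx. }
  destruct (Glb_Rbar E); simpl in Hp; tauto.
Qed.

Lemma Glb_Rbar_nonneg_finite (E : R -> Prop) x0 :
  E x0 -> (forall x, E x -> 0 <= x) -> exists m, Glb_Rbar E = Finite m /\ 0 <= m.
Proof.
  intros Hx0 Hnonneg. destruct (Glb_Rbar_correct E) as [Hlb Hglb].
  pose proof (Hlb x0 Hx0) as Hle. pose proof (Hglb (Finite 0) Hnonneg) as Hge.
  destruct (Glb_Rbar E) as [m| |]; simpl in Hle, Hge; try contradiction.
  exists m. split; [reflexivity|exact Hge].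
Qed.

Lemma Glb_Rbar_approx (E : R -> Prop) m eps :
  Glb_Rbar E = Finite m -> 0 < eps -> exists x, E x /\ x < m + eps.
Proof.
  intros Hm Heps. apply NNPP. intro Hnone. destruct (Glb_Rbar_correct E) as [_ Hglb].
  assert (Hle : Rbar_le (Finite (m + eps)) (Glb_Rbar E)).
  { apply Hglb. intros x Hx. simpl. apply Rnot_lt_le. intro Hlt. apply Hnone. eauto. }
  rewrite Hm in Hle. simpl in Hle. lra.
Qed.

Lemma Glb_Rbar_le_approx (E : R -> Prop) m :
  (forall eps, 0 < eps -> E (m + eps)) -> Rbar_le (Glb_Rbar E) (Finite m).
Proof.
  intro HE. destruct (Glb_Rbar_correct E) as [Hlb _].
  assert (Hle : forall eps, 0 < eps -> Rbar_le (Glb_Rbar E) (Finite (m + eps))).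
  { intros eps Heps. apply Hlb, HE, Heps. }
  destruct (Glb_Rbar E) as [g| |]; simpl in *; [|exact (Hle 1 Rlt_0_1)|exact I].
  apply Rle_plus_epsilon. exact Hle.
Qed.

Lemma Rbar_le_scal_mult_Glb (A B : R -> Prop) (c : R) (x : Rbar) a0 b0 :
  0 <= c -> A a0 -> B b0 -> (forall a, A a -> 0 <= a) -> (forall b, B b -> 0 <= b) ->
  (forall a b, A a -> B b -> Rbar_le x (Finite (c * (a * b)))) ->
  Rbar_le x (Rbar_mult (Finite c) (Rbar_mult (Glb_Rbar A) (Glb_Rbar B))).
Proof.
  intros Hc Ha0 Hb0 HA HB Hx.
  destruct (Glb_Rbar_nonneg_finite A a0 Ha0 HA) as [L [EL HL]].
  destruct (Glb_Rbar_nonneg_finite B b0 Hb0 HB) as [M [EM HM]].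
  rewrite EL, EM. simpl.
  destruct x as [d| |]; simpl; [|exact (Hx a0 b0 Ha0 Hb0)|exact I].
  apply Rle_plus_epsilon. intros eps Heps.
  set (K := c * (L + M + 1) + 1).
  set (delta := Rmin 1 (eps / K)).
  assert (HK : 0 < K) by (unfold K; nra).
  assert (Hdelta : 0 < delta) by (apply Rmin_glb_lt; [lra|apply Rdiv_lt_0_compat; lra]).
  assert (Hdelta1 : delta <= 1) by apply Rmin_l.
  assert (HdeltaK : delta * K <= eps).
  { assert (Hle : delta <= eps / K) by apply Rmin_r.
    apply Rmult_le_compat_r with (r := K) in Hle; [|lra].
    unfold Rdiv in Hle. rewrite Rmult_assoc, Rinv_l, Rmult_1_r in Hle by lra. exact Hle. }
  destruct (Glb_Rbar_approx A L delta EL Hdelta) as [a [Ha Hlta]].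
  destruct (Glb_Rbar_approx B M delta EM Hdelta) as [b [Hb Hltb]].
  pose proof (Hx a b Ha Hb) as Hd. simpl in Hd.
  pose proof (HA a Ha). pose proof (HB b Hb).
  assert (Hab : a * b <= L * M + delta * (L + M + 1)).
  { assert (a * b <= (L + delta) * (M + delta)) by (apply Rmult_le_compat; lra). nra. }
  assert (Hcab : c * (a * b) <= c * (L * M) + delta * K).
  { unfold K. apply Rmult_le_compat_l with (r := c) in Hab; nra. }
  lra.
Qed.

Section Displacement.
Variables (G : Grp) (nu : G -> R) (H : G -> Prop) (h0 : G).
Hypothesis Hnu : conj_inv_pseudo_norm G nu.
Hypothesis Hh0 : DfH G H H h0.

(* With t a suitable conjugate of h0, the element y = c t z t^-1 c^-1 commutes with every
   factor of the product, and x y^-1 is conjugate to the commutator [z, t]. *)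
Lemma displaced_conj_commutes c z l :
  H z -> List.Forall (fun p => H (snd p)) l ->
  exists y, gcommute G y (conj_prod l) /\ nu (gmul (gconj c z) (ginv y)) <= 2 * nu h0.
Proof.
  intros Hz Hl.
  destruct (Hh0 (map (fun p => gmul (ginv c) (fst p)) l)) as [h Hh].
  set (t := gconj h h0).
  exists (gconj c (gconj t z)). split.
  - apply gcommute_conj_prod. intros [gi x] Hin. simpl.
    replace (gconj gi x) with (gconj c (gconj (gmul (ginv c) gi) x)) by (gsimpl; reflexivity).
    apply gcommute_conj, Hh; [exact Hz| |].
    + apply in_map_iff. exists (gi, x). split; [reflexivity|exact Hin].
    + rewrite Forall_forall in Hl. exact (Hl (gi, x) Hin).
  - replace (gmul (gconj c z) (ginv (gconj c (gconj t z))))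
      with (gconj c (gmul (gconj z t) (ginv t))) by (gsimpl; reflexivity).
    rewrite nu_conj by exact Hnu.
    eapply Rle_trans; [apply nu_mul_le, Hnu|].
    rewrite nu_conj, nuV by exact Hnu. unfold t. rewrite nu_conj by exact Hnu. lra.
Qed.

End Displacement.

Section QuasimorphismBound.
Variables (G : Grp) (nu : G -> R) (H : G -> Prop) (psi : word G -> R) (C : R) (h0 : G).
Hypothesis Hnu : conj_inv_pseudo_norm G nu.
Hypothesis Hadd : forall w v, psi (w ++ v) = psi w + psi v.
Hypothesis HC : lip_with G nu psi C.
Hypothesis Hh0 : DfH G H H h0.
Hypothesis Hdecomp :
  forall h, exists l, List.Forall (fun p => H (snd p)) l /\ h = conj_prod l.

Lemma defect_phi_of_conj_l c z h :
  H z -> Rabs (defect G (phi_of psi) (gconj c z) h) <= 4 * C * nu h0.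
Proof.
  intro Hz. destruct (Hdecomp h) as [l [Hl ->]].
  destruct (displaced_conj_commutes G nu H h0 Hnu Hh0 c z l Hz Hl) as [y [Hy Hnuy]].
  eapply Rle_trans; [exact (defect_phi_of_l G nu psi C Hnu HC Hadd _ _ _ Hy)|].
  pose proof (proj1 HC). nra.
Qed.

Lemma defect_phi_of_conj_r c z h :
  H z -> Rabs (defect G (phi_of psi) h (gconj c z)) <= 4 * C * nu h0.
Proof.
  intro Hz. destruct (Hdecomp h) as [l [Hl ->]].
  destruct (displaced_conj_commutes G nu H h0 Hnu Hh0 c z l Hz Hl) as [y [Hy Hnuy]].
  eapply Rle_trans; [exact (defect_phi_of_r G nu psi C Hnu HC Hadd _ _ _ Hy)|].
  pose proof (proj1 HC). nra.
Qed.

Lemma defect_phi_of_le f g k :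
  conj_prod_len G H f k \/ conj_prod_len G H g k ->
  Rabs (defect G (phi_of psi) f g) <= 8 * C * nu h0 * INR k.
Proof.
  replace (8 * C * nu h0) with (2 * (4 * C * nu h0)) by ring.
  pose proof (phi_of_one G nu psi C Hnu HC Hadd) as Hone.
  intros [[l [<- [Hl ->]]] | [l [<- [Hl ->]]]].
  - exact (defect_conj_prod_l G _ H _ Hone defect_phi_of_conj_l l g Hl).
  - exact (defect_conj_prod_r G _ H _ Hone defect_phi_of_conj_l defect_phi_of_conj_r l f Hl).
Qed.

End QuasimorphismBound.

Section DefectToQuasimorphism.
Variables (G : Grp) (H : G -> Prop) (phi : G -> R) (B : R).
Hypothesis defect_le :
  forall f g k, conj_prod_len G H f k \/ conj_prod_len G H g k ->
  Rabs (defect G phi f g) <= B * INR k.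

Lemma qm_ineq_of_defect_le C : 0 < C -> B <= C -> qm_ineq G H phi C.
Proof.
  intros HC HBC f g.
  fold (defect G phi f g). set (d := Rabs (defect G phi f g)).
  assert (HnuH : forall u, u = f \/ u = g -> Rbar_le (Finite (d / C)) (nuH G H u)).
  { intros u Hu. apply Glb_Rbar_correct. intros x [k [Hk ->]]. simpl.
    apply Rle_div_l; [exact HC|].
    pose proof (pos_INR k).
    assert (d <= B * INR k) by (apply defect_le; destruct Hu as [-> | ->]; tauto).
    nra. }
  replace d with (C * (d / C)) by (field; lra).
  apply Rbar_le_mult_pos; [exact HC|].
  apply Rbar_min_case; apply HnuH; tauto.
Qed.

Lemma Dqm_le_of_defect_le : 0 <= B -> Rbar_le (Dqm G H phi) (Finite B).
Proof.
  intro HB. apply Glb_Rbar_le_approx. intros eps Heps.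
  split; [lra|]. apply qm_ineq_of_defect_le; lra.
Qed.

End DefectToQuasimorphism.

Lemma FM_conj_prod_decomp (G : Grp) (H : G -> Prop) :
  FM G H -> forall h, exists l, List.Forall (fun p => H (snd p)) l /\ h = conj_prod l.
Proof.
  intros [_ [Hfin _]] h.
  destruct (Glb_Rbar_inhabited _ (Hfin h)) as [_ [_ [[l [_ [Hl Eh]]] _]]].
  exists l. exact (conj Hl Eh).
Qed.

Lemma FM_displacer (G : Grp) (H : G -> Prop) : FM G H -> exists h0, DfH G H H h0.
Proof.
  intros [_ [_ Hdisp]]. destruct (Hdisp (gone :: nil)) as [h0 Hh0].
  exists h0. intro gs. destruct (Hh0 gs) as [h Hh]. exists h.
  intros k Hk gi x Hgi Hx. apply Hh; [|exact Hgi|exact Hx].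
  exists gone, k. split; [left; reflexivity|]. split; [exact Hk|]. gsimpl. reflexivity.
Qed.

Theorem proposition2p5 (G : Grp) (nu : G -> R) (H : G -> Prop) (psi : word G -> R) :
  conj_inv_pseudo_norm G nu ->
  FM G H ->
  in_L G nu psi ->
  let phi := fun g : G => psi ((g, 1) :: nil) in
  homogeneous G phi /\ H_quasimorphism G H phi /\
  Rbar_le (Dqm G H phi)
          (Rbar_mult (Finite 8) (Rbar_mult (lip_const G nu psi) (EHnu G nu H H))).
Proof.
  intros Hnu HFM [Hadd [Hscale [C0 HC0]]] phi.
  change phi with (phi_of psi).
  pose proof (FM_conj_prod_decomp G H HFM) as Hdecomp.
  destruct (FM_displacer G H HFM) as [h0 Hh0].
  pose proof (nu_ge0 G nu Hnu) as Hnu_ge0.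
  assert (Hdefect : forall C h1, lip_with G nu psi C -> DfH G H H h1 ->
            forall f g k, conj_prod_len G H f k \/ conj_prod_len G H g k ->
            Rabs (defect G (phi_of psi) f g) <= 8 * C * nu h1 * INR k).
  { intros C h1 HC Hh1. exact (defect_phi_of_le G nu H psi C h1 Hnu Hadd HC Hh1 Hdecomp). }
  split; [|split].
  - exact (phi_of_homogeneous G nu psi C0 Hnu HC0 Hscale).
  - exists (8 * C0 * nu h0 + 1). pose proof (proj1 HC0). pose proof (Hnu_ge0 h0).
    split; [nra|]. apply (qm_ineq_of_defect_le G H _ _ (Hdefect C0 h0 HC0 Hh0)); nra.
  - apply (Rbar_le_scal_mult_Glb _ _ 8 _ C0 (nu h0)); [lra|exact HC0|eauto|..].
    + intros C HC. exact (proj1 HC).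
    + intros x [h1 [_ ->]]. apply Hnu_ge0.
    + intros C x HC [h1 [Hh1 ->]]. rewrite <- Rmult_assoc.
      apply Dqm_le_of_defect_le; [exact (Hdefect C h1 HC Hh1)|].
      pose proof (proj1 HC). pose proof (Hnu_ge0 h1). nra.
Qed.
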